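(* Let $\Omega\subset B(\mathcal H)^d$ be an NC domain with exhausting sequence $\{\Omega_k\}$, and let $f:\Omega\to B(\mathcal H)^r$ be an NC function. Then: (a) for each $k$, $f(\Omega_k)$ is norm-bounded; (b) if $x_1,x_2,\dots$ is a sequence in $\Omega$ of length $l\in\mathbb N\cup\{\infty\}$ and $s:\mathcal H\to\mathcal H^{(l)}$ is a bounded invertible linear map with $s^{-1}\big(\bigoplus_n x_n\big)s\in\Omega$, then $\sup_n\|f(x_n)\|<\infty$ and $$f\Big(s^{-1}\Big(\bigoplus_n x_n\Big)s\Big)=s^{-1}\Big(\bigoplus_n f(x_n)\Big)s.$$
   Context: Throughout, $\mathcal H$ is an infinite-dimensional separable complex Hilbert space, $B(\mathcal H)$ the bounded operators with the operator norm, and $\mathcal H^{(l)}$ ($l\in\mathbb N\cup\{\infty\}$) the direct sum of $l$ copies of $\mathcal H$. $B(\mathcal H)^d$ has the norm $\|x\|=\max_i\|x^i\|$. Operations on tuples are componentwise: for bounded invertible linear $s:\mathcal H\to\mathcal H^{(l)}$ and $z\in B(\mathcal H^{(l)})^d$, $s^{-1}zs=(s^{-1}z^1s,\dots,s^{-1}z^ds)$; for a finite or countable sequence $x_1,x_2,\dots$ in $B(\mathcal H)^d$ of length $l$ (uniformly bounded when $l=\infty$), $\bigoplus_n x_n\in B(\mathcal H^{(l)})^d$ has $i$-th entry $\bigoplus_n x_n^i$; block matrices of tuples are defined entrywise per coordinate. A set is unitarily invariant if $u^*xu$ lies in it for each of its elements $x$ and each unitary $u\in B(\mathcal H)$. NC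 domain: $\Omega\subset B(\mathcal H)^d$ is an NC domain if there are subsets $\Omega_1,\Omega_2,\dots$ of $\Omega$ (an exhausting sequence) with (1) $\Omega_k\subset\mathrm{int}\,\Omega_{k+1}$ (norm interior) and $\Omega=\bigcup_k\Omega_k$; (2) each $\Omega_k$ norm-bounded and unitarily invariant; (3) for every sequence $x_1,x_2,\dots$ in $\Omega_k$ of length $l\in\mathbb N\cup\{\infty\}$ there is a unitary $u:\mathcal H\to\mathcal H^{(l)}$ with $u^{-1}(\bigoplus_n x_n)u\in\Omega_k$. NC function: $f:\Omega\to B(\mathcal H)^r$ on an NC domain is NC if whenever $x,y\in\Omega$ and $s:\mathcal H\to\mathcal H^{(2)}$ is bounded, linear, invertible with $s^{-1}\begin{bmatrix}x&0\\0&y\end{bmatrix}s\in\Omega$, then $f\Big(s^{-1}\begin{bmatrix}x&0\\0&y\end{bmatrix}s\Big)=s^{-1}\begin{bmatrix}f(x)&0\\0&f(y)\end{bmatrix}s$. *)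

(* H := l^2(N) over C = R[i] (R = Stdlib reals, a realType);
   H^(l) := l^2(idx l * N), idx l = {0,..,l-1} (l finite) or N (l = oo). *)
From mathcomp Require Import all_boot all_order all_algebra.
Import Order.TTheory GRing.Theory Num.Theory.
From mathcomp Require Import complex.
From mathcomp Require Import all_classical all_reals all_analysis Rstruct.
Set Implicit Arguments. Unset Strict Implicit. Unset Printing Implicit Defensive.
Local Open Scope classical_set_scope.
Local Open Scope ring_scope.

Definition RR : realType := Rdefinitions.R.
Definition CC : fieldType := RR[i].

Definition cn2 (z : CC) : RR := (Re z) ^+ 2 + (Im z) ^+ 2.

Definition sqsum (I : choiceType) (v : I -> CC) : \bar RR :=
  \esum_(i in [set: I]) (cn2 (v i))%:E.

Definition sqsummable (I : choiceType) (v : I -> CC) : Prop := (sqsum v < +oo)%E.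

Definition l2 (I : choiceType) := {v : I -> CC | sqsummable v}.

Lemma sqsummable0 (I : choiceType) : sqsummable (fun _ : I => 0 : CC).
Proof.
rewrite /sqsummable /sqsum esum1 ?ltry// => i _.
by rewrite /cn2 /= expr0n /= addr0.
Qed.

Definition l2zero (I : choiceType) : l2 I := exist _ _ (@sqsummable0 I).

(* the element of l^2(I) given by v when v is square-summable (0 otherwise;
   only used on square-summable v) *)
Definition mkl2 (I : choiceType) (v : I -> CC) : l2 I :=
  match pselect (sqsummable v) with
  | left p => exist _ v p
  | right _ => l2zero I
  end.

Definition vnorm (I : choiceType) (v : I -> CC) : RR := Num.sqrt (fine (sqsum v)).
Definition nrm (I : choiceType) (v : l2 I) : RR := vnorm (proj1_sig v).

Definition Op (I J : choiceType) := l2 I -> l2 J.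

Definition is_linear_op (I J : choiceType) (T : Op I J) : Prop :=
  forall (a : CC) (u v w : l2 I),
    (forall i, proj1_sig w i = a * proj1_sig u i + proj1_sig v i) ->
    forall j, proj1_sig (T w) j = a * proj1_sig (T u) j + proj1_sig (T v) j.

Definition is_bounded_op (I J : choiceType) (T : Op I J) : Prop :=
  exists M : RR, forall v, nrm (T v) <= M * nrm v.

Definition bop (I J : choiceType) (T : Op I J) : Prop :=
  is_linear_op T /\ is_bounded_op T.

Definition opnorm (I J : choiceType) (T : Op I J) : RR :=
  sup [set nrm (T v) | v in [set v : l2 I | nrm v <= 1]].

Definition opdist (I J : choiceType) (T T' : Op I J) : RR :=
  sup [set vnorm (fun j => proj1_sig (T v) j - proj1_sig (T' v) j)
      | v in [set v : l2 I | nrm v <= 1]].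

Definition BH := Op nat nat.
Definition BHt (d : nat) := 'I_d -> BH.

Definition bopt (d : nat) (x : BHt d) : Prop := forall i, bop (x i).

Definition tnorm (d : nat) (x : BHt d) : RR := \big[Num.max/0]_(i < d) opnorm (x i).
Definition tdist (d : nat) (x y : BHt d) : RR :=
  \big[Num.max/0]_(i < d) opdist (x i) (y i).

Definition norm_bounded (d : nat) (S : set (BHt d)) : Prop :=
  exists M : RR, forall x, S x -> tnorm x <= M.

Definition in_norm_interior (d : nat) (S : set (BHt d)) (x : BHt d) : Prop :=
  exists2 e : RR, 0 < e & forall y, bopt y -> tdist y x < e -> S y.

Definition unitary (I J : choiceType) (u : Op I J) : Prop :=
  is_linear_op u /\ (forall v, nrm (u v) = nrm v) /\ bijective u.

Definition binvertible (I J : choiceType) (s : Op I J) (t : Op J I) : Prop :=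
  bop s /\ bop t /\ cancel s t /\ cancel t s.

Definition conjt (J : choiceType) (d : nat) (t : Op J nat)
    (z : 'I_d -> Op J J) (s : Op nat J) : BHt d :=
  fun i => t \o z i \o s.

Definition unitarily_invariant (d : nat) (S : set (BHt d)) : Prop :=
  forall x (u u' : BH), S x -> unitary u -> cancel u u' -> cancel u' u ->
    S (conjt u' (fun i => x i) u).

(* lengths l in N u {oo}: Some m = m, None = oo *)
Definition len := option nat.
Definition inL (l : len) (n : nat) : bool := if l is Some m then (n < m)%N else true.
Definition valid_len (l : len) : Prop := if l is Some m then (0 < m)%N else True.
Definition idx (l : len) := {n : nat | inL l n}.
Definition Hidx (l : len) : choiceType := (idx l * nat)%type.

Definition comp_of (l : len) (w : l2 (Hidx l)) (n : idx l) : l2 nat :=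
  mkl2 (fun m => proj1_sig w (n, m)).

Definition dsum (l : len) (x : nat -> BH) : Op (Hidx l) (Hidx l) :=
  fun w => mkl2 (fun p : Hidx l => proj1_sig (x (proj1_sig p.1) (comp_of w p.1)) p.2).

Arguments dsum : clear implicits.

Definition dsumt (d : nat) (l : len) (x : nat -> BHt d) : 'I_d -> Op (Hidx l) (Hidx l) :=
  fun i => dsum l (fun n => x n i).

Arguments dsumt {d} l x i.

Definition unif_bounded (d : nat) (l : len) (x : nat -> BHt d) : Prop :=
  exists M : RR, forall n, inL l n -> tnorm (x n) <= M.

Definition dsum_closed (d : nat) (S : set (BHt d)) : Prop :=
  forall (l : len) (x : nat -> BHt d), valid_len l ->
    (forall n, inL l n -> S (x n)) ->
    exists (u : Op nat (Hidx l)) (u' : Op (Hidx l) nat),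
      [/\ unitary u, cancel u u', cancel u' u & S (conjt u' (dsumt l x) u)].

Definition nc_domain (d : nat) (Om : set (BHt d)) (Omk : nat -> set (BHt d)) : Prop :=
  [/\ (forall x, Om x -> bopt x),
      (forall k, Omk k `<=` Om),
      (forall k x, Omk k x -> in_norm_interior (Omk k.+1) x),
      (forall x, Om x -> exists k, Omk k x) &
      [/\ (forall k, norm_bounded (Omk k)),
          (forall k, unitarily_invariant (Omk k)) &
          (forall k, dsum_closed (Omk k))]].

(* the 2x2 block diagonal [x 0; 0 y] is the direct sum of length 2 *)
Definition pair_seq (d : nat) (x y : BHt d) : nat -> BHt d :=
  fun n => if n == 0%N then x else y.

Definition nc_function (d r : nat) (Om : set (BHt d)) (f : BHt d -> BHt r) : Prop :=
  (forall x, Om x -> bopt (f x)) /\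
  (forall (x y : BHt d) (s : Op nat (Hidx (Some 2%N))) (t : Op (Hidx (Some 2%N)) nat),
    Om x -> Om y -> binvertible s t ->
    Om (conjt t (dsumt (Some 2%N) (pair_seq x y)) s) ->
    f (conjt t (dsumt (Some 2%N) (pair_seq x y)) s) =
      conjt t (dsumt (Some 2%N) (pair_seq (f x) (f y))) s).

(* Everything rests on one intertwining principle: if L is bounded and
   y L = L x (coordinatewise), then f(y) L = L f(x).  Indeed the shear
   S = [1 L; 0 1] is invertible and commutes with diag(y, x), so conjugating
   diag(y, x) into the domain by a unitary u and by S u gives the same point;
   the NC property applied to both similarities shows that S also commutes
   with diag(f y, f x), whose corner entry is exactly f(y) L - L f(x).
   For y = s^{-1} (⊕ x_n) s one has y (s^{-1} ι_n) = (s^{-1} ι_n) x_n and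
   (π_n s) y = x_n (π_n s), with ι_n, π_n the n-th inclusion and projection;
   the first identity bounds ||f(x_n)|| by ||s|| ||f(y)|| ||s^{-1}||, the
   second computes every component of s f(y) s^{-1}.  Finally, if f were
   unbounded on Ω_k, the direct sum of points x_n ∈ Ω_k with ||f(x_n)|| > n
   is unitarily equivalent to a point of Ω_k, contradicting the bound. *)
From HB Require Import structures.
From mathcomp Require Import all_boot all_order all_algebra.
Import Order.TTheory GRing.Theory Num.Theory.
From mathcomp Require Import complex.
From mathcomp Require Import all_classical all_reals all_analysis Rstruct.
From mathcomp Require Import ring.
Local Open Scope classical_set_scope.
Local Open Scope ring_scope.
Set Implicit Arguments. Unset Strict Implicit. Unset Printing Implicit Defensive.

Lemma cn2_ge0 (a : CC) : 0 <= cn2 a.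
Proof. by rewrite /cn2 addr_ge0 // sqr_ge0. Qed.

Lemma cn2M (a b : CC) : cn2 (a * b) = cn2 a * cn2 b.
Proof. by case: a => a1 a2; case: b => b1 b2; rewrite /cn2 /=; ring. Qed.

Lemma cn2D_le (a b : CC) : cn2 (a + b) <= 2 * (cn2 a + cn2 b).
Proof.
case: a => a1 a2; case: b => b1 b2; rewrite /cn2 /= -subr_ge0.
have -> : 2 * (a1 ^+ 2 + a2 ^+ 2 + (b1 ^+ 2 + b2 ^+ 2)) - ((a1 + b1) ^+ 2 + (a2 + b2) ^+ 2)
    = (a1 - b1) ^+ 2 + (a2 - b2) ^+ 2 by ring.
by rewrite addr_ge0 // sqr_ge0.
Qed.

Lemma cn20 : cn2 0 = 0.
Proof. by rewrite /cn2 /= expr0n /= addr0. Qed.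

Lemma cn2_eq0 (a : CC) : cn2 a = 0 -> a = 0.
Proof.
case: a => a1 a2; rewrite /cn2 /= => /eqP.
by rewrite paddr_eq0 ?sqr_ge0 // !sqrf_eq0 => /andP[/eqP -> /eqP ->].
Qed.

Lemma ge0_esumZl (I : choiceType) (a : I -> \bar RR) (c : RR) : 0 <= c ->
  (forall i, (0 <= a i)%E) ->
  \esum_(i in [set: I]) (c%:E * a i)%E = (c%:E * \esum_(i in [set: I]) a i)%E.
Proof.
move=> c0 a0; rewrite /esum -ereal_supZl //; last first.
  by apply/set0P; exists 0%E; exists set0; [exact: fsets_set0 | rewrite fsbig_set0].
congr ereal_sup; apply/seteqP; split => z /=.
  move=> [A hA <-]; exists (\sum_(i \in A) a i)%E; first by exists A.
  by rewrite ge0_mule_fsumr.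
by move=> [y [A hA <-] <-]; exists A => //; rewrite ge0_mule_fsumr.
Qed.

Lemma esum_ge_term (I : choiceType) (a : I -> \bar RR) (i0 : I) :
  (forall i, (0 <= a i)%E) -> (a i0 <= \esum_(i in [set: I]) a i)%E.
Proof.
move=> a0; rewrite (esumID [set i0]) // setTI esum_set1 //.
by rewrite leeDl // esum_ge0.
Qed.

Lemma esum_single (I : choiceType) (a : I -> \bar RR) (i0 : I) :
  (forall i, (0 <= a i)%E) -> (forall i, i != i0 -> a i = 0%E) ->
  \esum_(i in [set: I]) a i = a i0.
Proof.
move=> a0 az; rewrite (esumID [set i0]) // setTI esum_set1 //.
by rewrite esum1 ?adde0 // => i [_ /= /eqP]; apply: az.
Qed.

HB.lock Definition l2comb (I : choiceType) (a : CC) (w w' : l2 I) : l2 I :=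
  mkl2 (fun i => a * proj1_sig w i + proj1_sig w' i).

Section L2.
Variable I : choiceType.
Implicit Types (u v : I -> CC) (w : l2 I).

Definition nrm2 w : RR := fine (sqsum (proj1_sig w)).

Lemma sqsum_ge0 v : (0 <= sqsum v)%E.
Proof. by apply: esum_ge0 => i _; rewrite lee_fin cn2_ge0. Qed.

Lemma sqsummableE v : sqsummable v -> sqsum v = (fine (sqsum v))%:E.
Proof. by move=> h; rewrite fineK // ge0_fin_numE // sqsum_ge0. Qed.

Lemma sqsum_l2 w : sqsum (proj1_sig w) = (nrm2 w)%:E.
Proof. exact/sqsummableE/(proj2_sig w). Qed.

Lemma nrm2_ge0 w : 0 <= nrm2 w.
Proof. exact/fine_ge0/sqsum_ge0. Qed.

Lemma sqsum_le_sqsummable v (c : RR) :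
  (sqsum v <= c%:E)%E -> sqsummable v /\ fine (sqsum v) <= c.
Proof.
move=> h; have sv : sqsummable v by rewrite /sqsummable (le_lt_trans h) ?ltry.
by split => //; rewrite -lee_fin -sqsummableE.
Qed.

Lemma sqsum0 : sqsum (fun _ : I => 0 : CC) = 0%E.
Proof. by rewrite /sqsum esum1 // => i _; rewrite cn20. Qed.

Lemma sqsum_comb (a : CC) u v :
  (sqsum (fun i => (a * u i + v i)%R) <=
     (2 * cn2 a)%:E * sqsum u + (2 : RR)%:E * sqsum v)%E.
Proof.
rewrite /sqsum -!ge0_esumZl ?mulr_ge0 ?cn2_ge0 // => [|i|i]; last 2 first.
- by rewrite lee_fin cn2_ge0.
- by rewrite lee_fin cn2_ge0.
rewrite -esumD; last 2 first.
- by move=> i _; rewrite -EFinM lee_fin !mulr_ge0 ?cn2_ge0.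
- by move=> i _; rewrite -EFinM lee_fin mulr_ge0 ?cn2_ge0.
apply: le_esum => i _; rewrite -!EFinM -EFinD lee_fin.
by apply: (le_trans (cn2D_le _ _)); rewrite cn2M mulrDr mulrA.
Qed.

Lemma sqsummable_comb (a : CC) u v :
  sqsummable u -> sqsummable v -> sqsummable (fun i => a * u i + v i).
Proof.
move=> su sv; have := sqsum_comb a u v.
by rewrite (sqsummableE su) (sqsummableE sv) -!EFinM -EFinD => /sqsum_le_sqsummable[].
Qed.

Lemma l2_ext w w' : (forall i, proj1_sig w i = proj1_sig w' i) -> w = w'.
Proof.
case: w w' => v pv [v' pv'] /= /funext e; subst v'.
by congr exist; exact: Prop_irrelevance.
Qed.

Lemma mkl2E v : sqsummable v -> proj1_sig (mkl2 v) = v.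
Proof. by rewrite /mkl2; case: pselect. Qed.

Lemma mkl2K w : mkl2 (proj1_sig w) = w.
Proof. by apply: l2_ext => i; rewrite mkl2E //; exact: proj2_sig. Qed.

Lemma nrm2_l2zero : nrm2 (l2zero I) = 0.
Proof. by rewrite /nrm2 /= sqsum0. Qed.

Lemma nrm2_eq0 w : nrm2 w = 0 -> w = l2zero I.
Proof.
move=> h; apply: l2_ext => i /=; apply: cn2_eq0; apply/eqP.
rewrite eq_le cn2_ge0 andbT -lee_fin -h -sqsum_l2 /sqsum.
by apply: esum_ge_term => j; rewrite lee_fin cn2_ge0.
Qed.

Lemma nrm_ge0 w : 0 <= nrm w.
Proof. exact: sqrtr_ge0. Qed.

Lemma nrmE w : nrm w = Num.sqrt (nrm2 w).
Proof. by []. Qed.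

Lemma sqr_nrm w : nrm w ^+ 2 = nrm2 w.
Proof. by rewrite nrmE sqr_sqrtr // nrm2_ge0. Qed.

Lemma nrm_l2zero : nrm (l2zero I) = 0.
Proof. by rewrite nrmE nrm2_l2zero sqrtr0. Qed.

Lemma l2combE a w w' i : proj1_sig (l2comb a w w') i = a * proj1_sig w i + proj1_sig w' i.
Proof. by rewrite l2comb.unlock mkl2E //; apply: sqsummable_comb; exact: proj2_sig. Qed.

Lemma l2comb0l a w : l2comb a (l2zero I) w = w.
Proof. by apply: l2_ext => i; rewrite l2combE mulr0 add0r. Qed.

Lemma l2comb1r0 w : l2comb 1 w (l2zero I) = w.
Proof. by apply: l2_ext => i; rewrite l2combE mul1r addr0. Qed.

Lemma nrm2_scale (a : CC) w : nrm2 (l2comb a w (l2zero I)) = cn2 a * nrm2 w.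
Proof.
rewrite /nrm2 (_ : proj1_sig _ = fun i => a * proj1_sig w i + 0); last first.
  by apply: funext => i; rewrite l2combE.
have -> : sqsum (fun i => a * proj1_sig w i + 0) = ((cn2 a)%:E * sqsum (proj1_sig w))%E.
  rewrite /sqsum -ge0_esumZl ?cn2_ge0 //; last by move=> i; rewrite lee_fin cn2_ge0.
  by apply: eq_esum => i _; rewrite addr0 cn2M EFinM.
by rewrite sqsum_l2 -EFinM.
Qed.

End L2.

Lemma linear_opE (I J : choiceType) (T : Op I J) a u v :
  is_linear_op T -> T (l2comb a u v) = l2comb a (T u) (T v).
Proof.
by move=> hT; apply: l2_ext => j; rewrite l2combE; apply: hT => i; exact: l2combE.
Qed.

Lemma is_linear_opP (I J : choiceType) (T : Op I J) :
  (forall a u v, T (l2comb a u v) = l2comb a (T u) (T v)) -> is_linear_op T.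
Proof.
move=> h a u v w hw j; have -> : w = l2comb a u v by apply: l2_ext => i; rewrite l2combE hw.
by rewrite h l2combE.
Qed.

Lemma linear_op0 (I J : choiceType) (T : Op I J) :
  is_linear_op T -> T (l2zero I) = l2zero J.
Proof.
move=> hT; apply: l2_ext => j /=.
have e i : proj1_sig (l2zero I) i = 1 * proj1_sig (l2zero I) i + proj1_sig (l2zero I) i.
  by rewrite /= mul1r addr0.
have := hT _ _ _ _ e j; rewrite mul1r => h.
by apply: (addrI (proj1_sig (T (l2zero I)) j)); rewrite addr0 -h.
Qed.

Definition sqbounded_by (I J : choiceType) (T : Op I J) (C : RR) :=
  forall v, nrm2 (T v) <= C * nrm2 v.

Lemma bounded_sqbounded (I J : choiceType) (T : Op I J) :
  is_bounded_op T -> exists2 C, 0 <= C & sqbounded_by T C.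
Proof.
move=> [M hM]; exists (M ^+ 2) => [|v]; first exact: sqr_ge0.
rewrite -!sqr_nrm -exprMn lerXn2r ?nnegrE ?nrm_ge0 ?hM //.
exact: le_trans (nrm_ge0 _) (hM v).
Qed.

Lemma sqbounded_bounded (I J : choiceType) (T : Op I J) C :
  0 <= C -> sqbounded_by T C -> is_bounded_op T.
Proof. by move=> C0 hT; exists (Num.sqrt C) => v; rewrite !nrmE -sqrtrM // ler_wsqrtr. Qed.

Lemma bop_sqbounded (I J : choiceType) (T : Op I J) :
  bop T -> exists2 C, 0 <= C & sqbounded_by T C.
Proof. by move=> [_ /bounded_sqbounded]. Qed.

Lemma bop_nrm_le (I J : choiceType) (T : Op I J) :
  bop T -> exists2 M, 0 <= M & forall v, nrm (T v) <= M * nrm v.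
Proof.
move=> /bop_sqbounded[C C0 hC]; exists (Num.sqrt C) => // v.
by rewrite !nrmE -sqrtrM // ler_wsqrtr.
Qed.

Lemma bop_comp (I J K : choiceType) (T : Op I J) (U : Op J K) :
  bop T -> bop U -> bop (U \o T).
Proof.
move=> hT hU; split.
  by case: hT => hT _; case: hU => hU _ a u v w hw k; apply: hU => j; apply: hT.
have [C C0 hC] := bop_sqbounded hT; have [D D0 hD] := bop_sqbounded hU.
apply: (sqbounded_bounded (C := D * C)); first exact: mulr_ge0.
by move=> v /=; rewrite (le_trans (hD _)) // -mulrA ler_wpM2l.
Qed.

Lemma binvertible_comp (I J K : choiceType)
    (s : Op I J) (t : Op J I) (s' : Op J K) (t' : Op K J) :
  binvertible s t -> binvertible s' t' -> binvertible (s' \o s) (t \o t').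
Proof.
move=> [bs [bt [st ts]]] [bs' [bt' [st' ts']]].
split; first exact: bop_comp.
split; first exact: bop_comp.
by split => v /=; rewrite ?st' ?st ?ts ?ts'.
Qed.

Lemma unitary_binvertible (I J : choiceType) (u : Op I J) u' :
  unitary u -> cancel u u' -> cancel u' u -> binvertible u u'.
Proof.
move=> [hl [hn _]] uK u'K.
have bu : bop u by split => //; exists 1 => v; rewrite hn mul1r.
have lu' : is_linear_op u'.
  apply: is_linear_opP => a w1 w2; apply: (can_inj uK).
  by rewrite u'K linear_opE // !u'K.
split=> //; split; last by [].
by split=> //; exists 1 => v; rewrite -{2}(u'K v) hn mul1r.
Qed.

Lemma opnorm_le (I J : choiceType) (T : Op I J) C :
  0 <= C -> (forall v, nrm v <= 1 -> nrm (T v) <= C) -> opnorm T <= C.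
Proof.
move=> C0 h; apply: ge_sup; last by move=> _ [v hv <-]; apply: h.
by exists (nrm (T (l2zero I))), (l2zero I); rewrite //= nrm_l2zero.
Qed.

Lemma nrm_le_opnorm (I J : choiceType) (T : Op I J) v :
  bop T -> nrm (T v) <= opnorm T * nrm v.
Proof.
move=> hT; have [M M0 hM] := bop_nrm_le hT; have [hTl _] := hT.
have hs : has_sup [set nrm (T v) | v in [set v : l2 I | nrm v <= 1]].
  split; first by exists (nrm (T (l2zero I))), (l2zero I); rewrite //= nrm_l2zero.
  exists M => _ [w hw <-]; rewrite (le_trans (hM w)) //.
  by rewrite -[leRHS]mulr1 ler_wpM2l.
have [/nrm2_eq0 ->|v0] := eqVneq (nrm2 v) 0.
  by rewrite linear_op0 // !nrm_l2zero mulr0.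
have vp : 0 < nrm v by rewrite nrmE sqrtr_gt0 lt_def v0 nrm2_ge0.
set c := (nrm v)^-1; have c0 : 0 <= c by rewrite invr_ge0 ltW.
have nrm_scale w : nrm (l2comb (Complex c 0) w (l2zero _)) = c * nrm w.
  rewrite !nrmE nrm2_scale /cn2 /= expr0n /= addr0 sqrtrM ?sqr_ge0 //.
  by rewrite sqrtr_sqr ger0_norm.
have hin : [set nrm (T w) | w in [set w : l2 I | nrm w <= 1]]
    (nrm (T (l2comb (Complex c 0) v (l2zero I)))).
  by exists (l2comb (Complex c 0) v (l2zero I)); rewrite //= nrm_scale /c mulVf ?gt_eqF.
have := sup_upper_bound hs hin.
rewrite -/(opnorm T) linear_opE // linear_op0 // nrm_scale /c => h.
by rewrite -(ler_pdivrMr _ _ vp) mulrC.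
Qed.

Lemma tnorm_ge0 (d : nat) (x : BHt d) : 0 <= tnorm x.
Proof. by rewrite /tnorm; elim/big_rec: _ => // i y _ hy; rewrite le_max hy orbT. Qed.

Lemma tnorm_le (d : nat) (x : BHt d) C :
  0 <= C -> (forall i, opnorm (x i) <= C) -> tnorm x <= C.
Proof. by move=> C0 h; apply: bigmax_le. Qed.

Lemma nrm_le_tnorm (d : nat) (x : BHt d) i w : bopt x -> nrm (x i w) <= tnorm x * nrm w.
Proof.
move=> hx; apply: (le_trans (nrm_le_opnorm w (hx i))).
by rewrite ler_wpM2r ?nrm_ge0 // (le_bigmax _ (fun i => opnorm (x i))).
Qed.

(** * Direct sums *)

HB.lock Definition embed (l : len) (n : idx l) (v : l2 nat) : l2 (Hidx l) :=
  mkl2 (fun p : Hidx l => if p.1 == n then proj1_sig v p.2 else 0).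

Section DirectSum.
Variable l : len.

Lemma esum_Hidx (a : Hidx l -> \bar RR) : (forall p, (0 <= a p)%E) ->
  \esum_(p in [set: Hidx l]) a p = \esum_(n in [set: idx l]) \esum_(m in [set: nat]) a (n, m).
Proof.
move=> a0; rewrite esum_esum //.
have -> : [set: idx l] `*`` (fun _ => [set: nat]) = [set: Hidx l].
  by apply/seteqP; split => // p.
by apply: eq_esum => -[n m].
Qed.

Lemma comp_ofE (w : l2 (Hidx l)) n m : proj1_sig (comp_of w n) m = proj1_sig w (n, m).
Proof.
rewrite mkl2E //; apply: le_lt_trans (proj2_sig w).
rewrite /sqsum esum_Hidx => [|p]; last by rewrite lee_fin cn2_ge0.
apply: esum_ge_term.
by move=> i; apply: esum_ge0 => j _; rewrite lee_fin cn2_ge0.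
Qed.

Lemma nrm2_Hidx (w : l2 (Hidx l)) :
  (nrm2 w)%:E = \esum_(n in [set: idx l]) (nrm2 (comp_of w n))%:E.
Proof.
rewrite -sqsum_l2 /sqsum esum_Hidx => [|p]; last by rewrite lee_fin cn2_ge0.
by apply: eq_esum => n _; rewrite -sqsum_l2; apply: eq_esum => m _; rewrite comp_ofE.
Qed.

Lemma nrm2_comp_of_le (w : l2 (Hidx l)) n : nrm2 (comp_of w n) <= nrm2 w.
Proof.
rewrite -lee_fin nrm2_Hidx.
by apply: esum_ge_term => i; rewrite lee_fin nrm2_ge0.
Qed.

Lemma nrm_comp_of_le (w : l2 (Hidx l)) n : nrm (comp_of w n) <= nrm w.
Proof. by rewrite !nrmE ler_wsqrtr // nrm2_comp_of_le. Qed.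

Lemma comp_of_inj (w w' : l2 (Hidx l)) : (forall n, comp_of w n = comp_of w' n) -> w = w'.
Proof. by move=> h; apply: l2_ext => -[n m]; rewrite -!comp_ofE h. Qed.

Lemma comp_of_comb a (w w' : l2 (Hidx l)) n :
  comp_of (l2comb a w w') n = l2comb a (comp_of w n) (comp_of w' n).
Proof. by apply: l2_ext => m; rewrite comp_ofE !l2combE !comp_ofE. Qed.

Lemma bop_comp_of (n : idx l) : bop (fun w : l2 (Hidx l) => comp_of w n).
Proof.
split; first by move=> a u v w hw j; rewrite !comp_ofE; exact: hw.
by apply: (sqbounded_bounded (C := 1)) => // w; rewrite mul1r nrm2_comp_of_le.
Qed.

Lemma sqsum_embed (n : idx l) (v : l2 nat) :
  sqsum (fun p : Hidx l => if p.1 == n then proj1_sig v p.2 else 0) = (nrm2 v)%:E.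
Proof.
rewrite /sqsum esum_Hidx => [|p]; last by rewrite lee_fin cn2_ge0.
rewrite (@esum_single _ _ n) /= ?eqxx -?sqsum_l2 //.
- by move=> i; apply: esum_ge0 => j _; rewrite lee_fin cn2_ge0.
- by move=> i /negPf ->; apply: esum1 => j _; rewrite cn20.
Qed.

Lemma embedE (n : idx l) v p :
  proj1_sig (embed n v) p = if p.1 == n then proj1_sig v p.2 else 0.
Proof. by rewrite embed.unlock mkl2E // /sqsummable sqsum_embed ltry. Qed.

Lemma comp_of_embed (n : idx l) v n' :
  comp_of (embed n v) n' = if n' == n then v else l2zero nat.
Proof. by apply: l2_ext => m; rewrite comp_ofE embedE /=; case: (n' == n). Qed.

Lemma nrm_embed (n : idx l) v : nrm (embed n v) = nrm v.
Proof.
rewrite !nrmE /nrm2.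
have -> : proj1_sig (embed n v) = fun p : Hidx l => if p.1 == n then proj1_sig v p.2 else 0.
  by apply: funext => p; apply: embedE.
by rewrite sqsum_embed.
Qed.

Lemma bop_embed (n : idx l) : bop (embed n).
Proof.
split.
  move=> a u v w hw j; rewrite !embedE.
  by case: (j.1 == n); [exact: hw | rewrite mulr0 addr0].
by exists 1 => w; rewrite mul1r nrm_embed.
Qed.

Lemma comp_of_dsum (x : nat -> BH) (w : l2 (Hidx l)) C n :
  0 <= C -> (forall m, inL l m -> sqbounded_by (x m) C) ->
  comp_of (dsum l x w) n = x (proj1_sig n) (comp_of w n).
Proof.
move=> C0 hx.
pose v := fun p : Hidx l => proj1_sig (x (proj1_sig p.1) (comp_of w p.1)) p.2.
have sv : sqsummable v.
  rewrite /sqsummable /sqsum esum_Hidx => [|p]; last by rewrite lee_fin cn2_ge0.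
  apply: (@le_lt_trans _ _ (\esum_(n in [set: idx l]) (C%:E * (nrm2 (comp_of w n))%:E))%E).
    apply: le_esum => n' _; rewrite -EFinM.
    rewrite (_ : \esum_(m in _) _ = sqsum (proj1_sig (x (proj1_sig n') (comp_of w n')))) //.
    by rewrite sqsum_l2 lee_fin; exact: (hx _ (proj2_sig n')).
  by rewrite ge0_esumZl // => [|i]; rewrite ?lee_fin ?nrm2_ge0 // -nrm2_Hidx -EFinM ltry.
by apply: l2_ext => m; rewrite comp_ofE /dsum mkl2E.
Qed.

Lemma dsum_embed (x : nat -> BH) (n : idx l) v :
  (forall m, inL l m -> is_linear_op (x m)) ->
  dsum l x (embed n v) = embed n (x (proj1_sig n) v).
Proof.
move=> hx; rewrite /dsum -[RHS]mkl2K; congr mkl2; apply: funext => -[n' m].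
rewrite embedE comp_of_embed /=; case: eqP => [-> // | _].
by rewrite linear_op0 //; exact: hx _ (proj2_sig n').
Qed.

End DirectSum.

(** * The shear [1 L; 0 1] on H ⊕ H *)

Definition idx0 : idx (Some 2%N) := exist _ 0%N isT.
Definition idx1 : idx (Some 2%N) := exist _ 1%N isT.

Lemma idx2P (n : idx (Some 2%N)) : n = idx0 \/ n = idx1.
Proof.
case: n => -[|[|k]] hk //; [left | right];
  by congr exist; exact: Prop_irrelevance.
Qed.

(* [shear c L] maps (w0, w1) to (w0 + c L w1, w1) *)
Definition shear (c : CC) (L : BH) (w : l2 (Hidx (Some 2%N))) : l2 (Hidx (Some 2%N)) :=
  l2comb c (embed idx0 (L (comp_of w idx1))) w.

Lemma comp_of_shear1 c L w : comp_of (shear c L w) idx1 = comp_of w idx1.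
Proof. by rewrite comp_of_comb comp_of_embed l2comb0l. Qed.

Lemma comp_of_shear0 c L w :
  comp_of (shear c L w) idx0 = l2comb c (L (comp_of w idx1)) (comp_of w idx0).
Proof. by rewrite comp_of_comb comp_of_embed eqxx. Qed.

Lemma shearK c L : cancel (shear c L) (shear (- c) L).
Proof.
move=> w; apply: comp_of_inj => n; case: (idx2P n) => ->; last by rewrite !comp_of_shear1.
rewrite comp_of_shear0 comp_of_shear1 comp_of_shear0; apply: l2_ext => m.
by rewrite !l2combE mulNr addKr.
Qed.

Lemma shearNK c L : cancel (shear (- c) L) (shear c L).
Proof. by move=> w; have := shearK (- c) L w; rewrite opprK. Qed.

Lemma bop_shear c L : bop L -> bop (shear c L).
Proof.
move=> hL; have [D D0 hD] := bop_sqbounded hL; have [hLl _] := hL.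
split.
  apply: is_linear_opP => a u v; apply: comp_of_inj => n.
  case: (idx2P n) => ->; last by rewrite !(comp_of_comb, comp_of_shear1).
  rewrite !(comp_of_comb, comp_of_shear0) (linear_opE _ _ _ hLl).
  by apply: l2_ext => m; rewrite !l2combE; ring.
apply: (sqbounded_bounded (C := 2 * cn2 c * D + 2)) => [|w].
  by rewrite addr_ge0 // !mulr_ge0 // cn2_ge0.
set z := embed idx0 (L (comp_of w idx1)).
have := sqsum_comb c (proj1_sig z) (proj1_sig w).
rewrite !sqsum_l2 -!EFinM -EFinD => /sqsum_le_sqsummable[_].
have -> : fine (sqsum (fun i => c * proj1_sig z i + proj1_sig w i)) = nrm2 (shear c L w).
  by rewrite /nrm2; congr (fine (sqsum _)); apply: funext => i; rewrite l2combE.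
move=> /le_trans; apply; rewrite [leRHS]mulrDl lerD2r -mulrA ler_wpM2l ?mulr_ge0 ?cn2_ge0 //.
rewrite -(sqr_nrm z) nrm_embed sqr_nrm (le_trans (hD _)) //.
by rewrite ler_wpM2l // nrm2_comp_of_le.
Qed.

Lemma binvertible_shear c L : bop L -> binvertible (shear c L) (shear (- c) L).
Proof.
move=> hL; split; first exact: bop_shear.
by split; [exact: bop_shear | split; [exact: shearK | exact: shearNK]].
Qed.

Lemma comp_of_dsum2 (xs : nat -> BH) (w : l2 (Hidx (Some 2%N))) n :
  bop (xs 0%N) -> bop (xs 1%N) ->
  comp_of (dsum (Some 2%N) xs w) n = xs (proj1_sig n) (comp_of w n).
Proof.
move=> b0 b1; have [C0 C00 h0] := bop_sqbounded b0; have [C1 C10 h1] := bop_sqbounded b1.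
apply: (@comp_of_dsum _ _ _ (C0 + C1)); first exact: addr_ge0.
move=> -[|[|m]] // _ v; [apply: le_trans (h0 v) _ | apply: le_trans (h1 v) _];
  by rewrite ler_wpM2r ?nrm2_ge0 // ?lerDl ?lerDr.
Qed.

Lemma dsum2_shear_commP (xs : nat -> BH) (L : BH) :
  bop (xs 0%N) -> bop (xs 1%N) ->
  (forall w, dsum (Some 2%N) xs (shear 1 L w) = shear 1 L (dsum (Some 2%N) xs w)) <->
  (forall v, xs 0%N (L v) = L (xs 1%N v)).
Proof.
move=> b0 b1; have [hl0 _] := b0; split => [comm v | hint w].
  have := congr1 (fun w => comp_of w idx0) (comm (embed idx1 v)).
  rewrite /= !comp_of_dsum2 // !comp_of_shear0 !comp_of_dsum2 //=.
  by rewrite !comp_of_embed eqxx linear_opE // linear_op0 // !l2comb1r0.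
apply: comp_of_inj => n; case: (idx2P n) => ->.
  rewrite comp_of_dsum2 // !comp_of_shear0 !comp_of_dsum2 //=.
  by rewrite linear_opE // hint.
by rewrite comp_of_dsum2 // !comp_of_shear1 comp_of_dsum2.
Qed.

Lemma opdistxx (I J : choiceType) (T : Op I J) : opdist T T = 0.
Proof.
rewrite /opdist (_ : [set _ | _ in _] = [set 0]) ?sup1 //.
have diag0 v : vnorm (fun j => proj1_sig (T v) j - proj1_sig (T v) j) = 0.
  rewrite /vnorm (_ : (fun j => _) = fun _ => 0) ?sqsum0 ?sqrtr0 //.
  by apply: funext => j; rewrite subrr.
apply/seteqP; split => r /=; first by move=> [v _ <-]; exact: diag0.
by move=> ->; exists (l2zero I); rewrite /= ?nrm_l2zero ?diag0.
Qed.

Lemma tdistxx (d : nat) (x : BHt d) : tdist x x = 0.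
Proof. by rewrite /tdist; elim/big_rec: _ => // i r _ ->; rewrite opdistxx maxxx. Qed.

Section Exhaustion.
Variables (d : nat) (Om : set (BHt d)) (Omk : nat -> set (BHt d)).
Hypothesis hOm : nc_domain Om Omk.

Lemma nc_domain_bopt x : Om x -> bopt x.
Proof. by case: hOm => hb _ _ _ _; exact: hb. Qed.

Lemma exhaustion_sub k : Omk k `<=` Om.
Proof. by case: hOm => _ hsub _ _ _; exact: hsub. Qed.

Lemma exhaustion_le k m x : (k <= m)%N -> Omk k x -> Omk m x.
Proof.
case: hOm => _ _ hint _ _; move=> /subnK <-; elim: (m - k)%N => // n ih /ih hx.
have [e e0 h] := hint _ _ hx; apply: h; last by rewrite tdistxx.
exact/nc_domain_bopt/(exhaustion_sub hx).
Qed.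

Lemma exhaustion_common x y : Om x -> Om y -> exists k, Omk k x /\ Omk k y.
Proof.
case: hOm => _ _ _ hex _ /hex[kx hx] /hex[ky hy]; exists (maxn kx ky).
by split; [apply: exhaustion_le hx; rewrite leq_maxl | apply: exhaustion_le hy; rewrite leq_maxr].
Qed.

End Exhaustion.

Section NCFunction.
Variables (d r : nat) (Om : set (BHt d)) (Omk : nat -> set (BHt d)) (f : BHt d -> BHt r).
Hypotheses (hOm : nc_domain Om Omk) (hf : nc_function Om f).

Lemma nc_function_bopt x : Om x -> bopt (f x).
Proof. by case: hf => hb _; exact: hb. Qed.

Lemma nc_function_intertwine (y x : BHt d) (L : BH) :
  Om y -> Om x -> bop L -> (forall i z, y i (L z) = L (x i z)) ->
  forall j z, f y j (L z) = L (f x j z).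
Proof.
move=> Oy Ox hL hyx j v.
have [k [hy hx]] := exhaustion_common hOm Oy Ox.
have [_ _ _ _ [_ _ /(_ k (Some 2%N) (pair_seq y x) isT)]] := hOm.
case=> [n _|u [u' [hu uK u'K hz]]]; first by rewrite /pair_seq; case: (n == 0%N).
have bu := unitary_binvertible hu uK u'K.
have bS := binvertible_shear 1 hL.
set D := dsumt (Some 2%N) (pair_seq y x).
have commD i w : D i (shear 1 L w) = shear 1 L (D i w).
  have [by0 bx0] := (nc_domain_bopt hOm Oy, nc_domain_bopt hOm Ox).
  by move: w; apply/(@dsum2_shear_commP (fun n => pair_seq y x n i) L (by0 i) (bx0 i)).
have eqc : conjt (u' \o shear (- 1) L) D (shear 1 L \o u) = conjt u' D u.
  by apply: funext => i; apply: funext => w; rewrite /conjt /= commD shearK.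
have [_ hnc] := hf.
have := hnc y x _ _ Oy Ox (binvertible_comp bu bS); rewrite -/D eqc.
rewrite (hnc y x u u' Oy Ox bu (exhaustion_sub hOm hz)) => /(_ (exhaustion_sub hOm hz)).
set Df := dsumt (Some 2%N) (pair_seq (f y) (f x)) => e.
have commDf w : Df j (shear 1 L w) = shear 1 L (Df j w).
  have := congr1 (fun F => F j (u' w)) e; rewrite /conjt /= u'K => /(can_inj u'K) ->.
  by rewrite shearNK.
have [bfy bfx] := (nc_function_bopt Oy, nc_function_bopt Ox).
exact: (@dsum2_shear_commP (fun n => pair_seq (f y) (f x) n j) L (bfy j) (bfx j)).1 commDf v.
Qed.

Lemma nc_function_dsum_bounded (l : len) (x : nat -> BHt d) s t :
  (forall n, inL l n -> Om (x n)) -> binvertible s t ->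
  Om (conjt t (dsumt l x) s) ->
  exists M : RR, forall n, inL l n -> tnorm (f (x n)) <= M.
Proof.
move=> Ox [bs [bt [_ ts]]] Oy; set y := conjt t (dsumt l x) s.
have [Ms Ms0 hMs] := bop_nrm_le bs; have [Mt Mt0 hMt] := bop_nrm_le bt.
have M0 : 0 <= Ms * tnorm (f y) * Mt by rewrite !mulr_ge0 // tnorm_ge0.
exists (Ms * tnorm (f y) * Mt) => n ln; set nn : idx l := exist _ n ln.
(* y (t ι_n) = (t ι_n) x_n, hence f(x_n) = π_n s f(y) t ι_n *)
have hint i z : y i (t (embed nn z)) = t (embed nn (x n i z)).
  rewrite /y /conjt /= ts /dsumt dsum_embed // => m lm.
  by case: (nc_domain_bopt hOm (Ox m lm) i).
have key := nc_function_intertwine Oy (Ox n ln) (bop_comp (bop_embed nn) bt) hint.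
apply: tnorm_le => // j; apply: opnorm_le => // v hv.
have -> : f (x n) j v = comp_of (s (f y j (t (embed nn v)))) nn.
  by rewrite (key j v) ts comp_of_embed eqxx.
apply: (le_trans (nrm_comp_of_le _ _)); apply: (le_trans (hMs _)).
rewrite -!mulrA ler_wpM2l //.
apply: (le_trans (nrm_le_tnorm _ _ (nc_function_bopt Oy))).
rewrite ler_wpM2l ?tnorm_ge0 // (le_trans (hMt _)) // nrm_embed.
by rewrite -[leRHS]mulr1 ler_wpM2l.
Qed.

Lemma nc_function_dsum (l : len) (x : nat -> BHt d) s t :
  (forall n, inL l n -> Om (x n)) -> unif_bounded l x -> binvertible s t ->
  Om (conjt t (dsumt l x) s) ->
  f (conjt t (dsumt l x) s) = conjt t (dsumt l (fun n => f (x n))) s.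
Proof.
move=> Ox [M hM] [bs [bt [st ts]]] Oy; set y := conjt t (dsumt l x) s.
have hx i m : inL l m -> sqbounded_by (x m i) (M ^+ 2).
  move=> lm v; rewrite -!sqr_nrm -exprMn lerXn2r ?nnegrE ?nrm_ge0 //.
    by rewrite mulr_ge0 ?nrm_ge0 // (le_trans (tnorm_ge0 (x m))) ?hM.
  by rewrite (le_trans (nrm_le_tnorm _ _ (nc_domain_bopt hOm (Ox m lm)))) // ler_wpM2r ?nrm_ge0 ?hM.
(* (π_n s) y = x_n (π_n s), hence π_n s f(y) = f(x_n) π_n s *)
have key (nn : idx l) j w :
    f (x (proj1_sig nn)) j (comp_of (s w) nn) = comp_of (s (f y j w)) nn.
  have hint i z : x (proj1_sig nn) i (comp_of (s z) nn) = comp_of (s (y i z)) nn.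
    by rewrite /y /conjt /= ts /dsumt (comp_of_dsum _ _ (sqr_ge0 M) (hx i)).
  exact: (nc_function_intertwine (Ox _ (proj2_sig nn)) Oy (bop_comp bs (bop_comp_of nn)) hint).
apply: funext => j; apply: funext => w.
rewrite /conjt /= -[f y j w]st -[s (f y j w)]mkl2K /dsumt /dsum.
by congr (t (mkl2 _)); apply: funext => -[nn m] /=; rewrite key comp_ofE.
Qed.

Lemma nc_function_bounded_on_exhaustion k : norm_bounded (f @` Omk k).
Proof.
apply: contrapT => unbounded.
have large n : exists z, Omk k z /\ n%:R < tnorm (f z).
  apply: contrapT => hne; apply: unbounded; exists n%:R => _ [z hz <-].
  by rewrite leNgt; apply/negP => hlt; apply: hne; exists z.
have [xs hxs] := choice large.
have [_ _ _ _ [_ _ /(_ k None xs I (fun n _ => (hxs n).1))]] := hOm.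
move=> [u [u' [hu uK u'K /(exhaustion_sub hOm) Oz]]].
have [M hM] := nc_function_dsum_bounded (fun n _ => exhaustion_sub hOm (hxs n).1)
  (unitary_binvertible hu uK u'K) Oz.
have := archi_boundP (normr_ge0 M); set n := Num.bound `|M| => hn.
have := lt_le_trans (hxs n).2 (le_trans (hM n isT) (ler_norm M)).
by rewrite ltNge ltW.
Qed.

End NCFunction.

Theorem mainTheorem8 (d r : nat) (Om : set (BHt d)) (Omk : nat -> set (BHt d))
    (f : BHt d -> BHt r) :
  nc_domain Om Omk -> nc_function Om f ->
  (forall k, norm_bounded (f @` Omk k)) /\
  (forall (l : len) (x : nat -> BHt d) (s : Op nat (Hidx l)) (t : Op (Hidx l) nat),
     valid_len l ->
     (forall n, inL l n -> Om (x n)) ->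
     unif_bounded l x ->
     binvertible s t ->
     Om (conjt t (dsumt l x) s) ->
     (exists M : RR, forall n, inL l n -> tnorm (f (x n)) <= M) /\
     f (conjt t (dsumt l x) s) = conjt t (dsumt l (fun n => f (x n))) s).
Proof.
move=> hOm hf; split => [k | l x s t _ Ox xb st Oy].
  exact: nc_function_bounded_on_exhaustion hOm hf k.
exact (conj (nc_function_dsum_bounded hOm hf Ox st Oy)
             (nc_function_dsum hOm hf Ox xb st Oy)).
Qed.
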